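(* Let $(\mathfrak{g},[\cdot,\cdot]_{\mathfrak{g}})$ be a Leibniz algebra over a field $\mathbf{K}$, $(V;\rho^L,\rho^R)$ a representation, $T:V\to\mathfrak{g}$ a relative Rota-Baxter operator, and $T_t=\sum_{i=0}^n\mathfrak{T}_it^i$ an order $n$ deformation of $T$. Define $\mathrm{Ob}_T\in C^2(V,\mathfrak{g})$ by $\mathrm{Ob}_T(u,v)=\sum_{i+j=n+1,\ i,j\ge1}\big([\mathfrak{T}_iu,\mathfrak{T}_jv]_{\mathfrak{g}}-\mathfrak{T}_i(\rho^L(\mathfrak{T}_ju)v+\rho^R(\mathfrak{T}_jv)u)\big)$. Then $\partial_T\mathrm{Ob}_T=0$, i.e. $\mathrm{Ob}_T$ is a 2-cocycle.
   Context: A Leibniz algebra is a vector space $\mathfrak{g}$ with bilinear $[\cdot,\cdot]_{\mathfrak{g}}$ satisfying $[x,[y,z]_{\mathfrak{g}}]_{\mathfrak{g}}=[[x,y]_{\mathfrak{g}},z]_{\mathfrak{g}}+[y,[x,z]_{\mathfrak{g}}]_{\mathfrak{g}}$. A representation $(V;\rho^L,\rho^R)$: linear $\rho^L,\rho^R:\mathfrak{g}\to\mathfrak{gl}(V)$ with $\rho^L([x,y]_{\mathfrak{g}})=[\rho^L(x),\rho^L(y)]$, $\rho^R([x,y]_{\mathfrak{g}})=[\rho^L(x),\rho^R(y)]$, $\rho^R(y)\rho^L(x)=-\rho^R(y)\rho^R(x)$. A relative Rota-Baxter operator is a linear $T:V\to\mathfrak{g}$ with $[Tv_1,Tv_2]_{\mathfrak{g}}=T(\rho^L(Tv_1)v_2+\rho^R(Tv_2)v_1)$.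 $C^k(V,\mathfrak{g})=\mathrm{Hom}(\otimes^kV,\mathfrak{g})$ and $\partial_T:C^k\to C^{k+1}$ is $(\partial_Tf)(v_1,\dots,v_{k+1})=\sum_{i=1}^k(-1)^{i+1}[Tv_i,f(v_1,\dots,\hat v_i,\dots,v_{k+1})]_{\mathfrak{g}}-\sum_{i=1}^k(-1)^{i+1}T\rho^R(f(v_1,\dots,\hat v_i,\dots,v_{k+1}))v_i+(-1)^{k+1}[f(v_1,\dots,v_k),Tv_{k+1}]_{\mathfrak{g}}+(-1)^kT\rho^L(f(v_1,\dots,v_k))v_{k+1}+\sum_{1\le i<j\le k+1}(-1)^if(v_1,\dots,\hat v_i,\dots,v_{j-1},\rho^L(Tv_i)v_j+\rho^R(Tv_j)v_i,v_{j+1},\dots,v_{k+1})$. An order $n$ deformation of $T$ is $T_t=\sum_{i=0}^n\mathfrak{T}_it^i$ with $\mathfrak{T}_0=T$, $\mathfrak{T}_i\in\mathrm{Hom}(V,\mathfrak{g})$, viewed as a $\mathbf{K}[t]/(t^{n+1})$-module map $V[t]/(t^{n+1})\to\mathfrak{g}[t]/(t^{n+1})$ (bracket and $\rho^L,\rho^R$ extended $\mathbf{K}[t]/(t^{n+1})$-bilinearly), such that $[T_t(u),T_t(v)]_{\mathfrak{g}}=T_t(\rho^L(T_t(u))v+\rho^R(T_t(v))u)$ for all $u,v\in V$; equivalently $\sum_{k+l=i,\,k,l\ge0}\big([\mathfrak{T}_ku,\mathfrak{T}_lv]_{\mathfrak{g}}-\mathfrak{T}_k(\rho^L(\mathfrak{T}_lu)v+\rho^R(\mathfrak{T}_lv)u)\big)=0$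 for $0\le i\le n$. *)

From HB Require Import structures.
From mathcomp Require Import all_boot all_order all_algebra.
Set Implicit Arguments. Unset Strict Implicit. Unset Printing Implicit Defensive.
Import GRing.Theory.
Local Open Scope ring_scope.

Section LeibnizDefs.
Variables (K : fieldType) (g V : lmodType K).

Definition is_leibniz (br : g -> g -> g) : Prop :=
  [/\ forall x, linear (br x), forall y, linear (fun x => br x y) &
      forall x y z, br x (br y z) = br (br x y) z + br y (br x z)].

Definition is_representation (br : g -> g -> g) (rhoL rhoR : g -> V -> V) : Prop :=
  [/\ (forall v, linear (fun x => rhoL x v)), (forall v, linear (fun x => rhoR x v)),
      (forall x, linear (rhoL x)) & (forall x, linear (rhoR x))] /\
  [/\ (forall x y v, rhoL (br x y) v = rhoL x (rhoL y v) - rhoL y (rhoL x v)),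
      (forall x y v, rhoR (br x y) v = rhoL x (rhoR y v) - rhoR y (rhoL x v)) &
      (forall x y v, rhoR y (rhoL x v) = - rhoR y (rhoR x v))].

Definition is_relRB (br : g -> g -> g) (rhoL rhoR : g -> V -> V) (T : V -> g) : Prop :=
  linear T /\
  forall v1 v2, br (T v1) (T v2) = T (rhoL (T v1) v2 + rhoR (T v2) v1).

(* Order n deformation T_t = sum_{i=0}^n Ts i t^i of T. *)
Definition is_order_deformation (br : g -> g -> g) (rhoL rhoR : g -> V -> V)
    (T : V -> g) (n : nat) (Ts : nat -> V -> g) : Prop :=
  [/\ Ts 0%N = T, (forall i, (i <= n)%N -> linear (Ts i)) &
      forall i, (i <= n)%N -> forall u v,
        \sum_(k < i.+1) (br (Ts k u) (Ts (i - k)%N v)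
            - Ts k (rhoL (Ts (i - k)%N u) v + rhoR (Ts (i - k)%N v) u)) = 0].

Definition obstruction (br : g -> g -> g) (rhoL rhoR : g -> V -> V)
    (n : nat) (Ts : nat -> V -> g) (u v : V) : g :=
  \sum_(1 <= i < n.+1) (br (Ts i u) (Ts (n.+1 - i)%N v)
      - Ts i (rhoL (Ts (n.+1 - i)%N u) v + rhoR (Ts (n.+1 - i)%N v) u)).

(* A k-cochain in C^k(V,g) is represented as a function of a list of arguments
   (only lists of length k matter).  Indices below are 0-based. *)
Definition drop_at (i : nat) (s : seq V) : seq V := take i s ++ drop i.+1 s.

Definition coboundary (br : g -> g -> g) (rhoL rhoR : g -> V -> V) (T : V -> g)
    (k : nat) (f : seq V -> g) (s : seq V) : g :=
  let v i := nth 0 s i in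
  \sum_(i < k) (-1) ^+ i *: br (T (v i)) (f (drop_at i s))
  - \sum_(i < k) (-1) ^+ i *: T (rhoR (f (drop_at i s)) (v i))
  + (-1) ^+ k.+1 *: br (f (take k s)) (T (v k))
  + (-1) ^+ k *: T (rhoL (f (take k s)) (v k))
  + \sum_(j < k.+1) \sum_(i < j)
      (-1) ^+ i.+1 *: f (drop_at i (set_nth 0 s j
                          (rhoL (T (v i)) (v j) + rhoR (T (v j)) (v i)))).

End LeibnizDefs.

(* For additive maps X, Y, Z : V -> g put
     Phi(Y, Z)(u, v) = [Y u, Z v] - Y (rhoL (Z u) v + rhoR (Z v) u)
   and let d_X be the degree-2 coboundary with X in place of T.  Expanding
   d_X Phi(Y, Z) with the Leibniz and representation identities, its terms fall
   into four groups, and each group cancels against a group of d_Y Phi(X, Z),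
   d_Z Phi(Y, X) and d_Z Phi(X, Y) respectively.  Hence the sum of
   d_(T_a) Phi(T_b, T_c) over a + b + c = n + 1 vanishes, without dividing by 6
   as a full symmetrisation would.  With T_i := 0 for i > n, the terms with
   a >= 1 vanish by the deformation equation in degree n + 1 - a, and the term
   a = 0 is d_T Ob_T. *)

From HB Require Import structures.
From mathcomp Require Import all_boot all_order all_algebra ring zify.
Set Implicit Arguments. Unset Strict Implicit. Unset Printing Implicit Defensive.
Import GRing.Theory.
Local Open Scope ring_scope.

Section TrivialExtension.
Variable M : zmodType.

Definition triv_ext := (int * M)%type.
HB.instance Definition _ := GRing.Zmodule.on triv_ext.

Definition triv_ext_one : triv_ext := (1, 0).

Definition triv_ext_mul (x y : triv_ext) : triv_ext := (x.1 * y.1, x.2 *~ y.1 + y.2 *~ x.1).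

Lemma triv_ext_mulA : associative triv_ext_mul.
Proof.
move=> [a x] [b y] [c z]; congr (_, _); first exact: mulrA.
by rewrite /= !mulrzDl -!mulrzA !addrA [b * c]mulrC [a * c]mulrC [a * b]mulrC.
Qed.

Lemma triv_ext_mulC : commutative triv_ext_mul.
Proof. by move=> [a x] [b y]; rewrite /triv_ext_mul /= mulrC addrC. Qed.

Lemma triv_ext_mul1 : left_id triv_ext_one triv_ext_mul.
Proof. by move=> [a x]; rewrite /triv_ext_mul /= mul1r mul0rz add0r. Qed.

Lemma triv_ext_mulDl : left_distributive triv_ext_mul +%R.
Proof.
move=> [a x] [b y] [c z]; congr (_, _); first exact: mulrDl.
by rewrite /= mulrzDl mulrzDr -!addrA; congr (_ + _); rewrite addrCA.
Qed.

HB.instance Definition _ := GRing.Zmodule_isComNzRing.Build triv_ext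
  triv_ext_mulA triv_ext_mulC triv_ext_mul1 triv_ext_mulDl (isT : triv_ext_one != 0).

Definition triv_ext_in (x : M) : triv_ext := (0, x).

Lemma triv_ext_in0 : triv_ext_in 0 = 0. Proof. by []. Qed.
Lemma triv_ext_inD : {morph triv_ext_in : x y / x + y}. Proof. by []. Qed.
Lemma triv_ext_inN : {morph triv_ext_in : x / - x}. Proof. by []. Qed.
Lemma triv_ext_in_inj : injective triv_ext_in. Proof. by move=> x y []. Qed.

End TrivialExtension.

(* [ring] only works in commutative rings: an identity between signed sums of
   atoms of a Z-module M is checked in the trivial extension int x M. *)
Ltac zmodule_ring :=
  apply: triv_ext_in_inj; rewrite ?(triv_ext_in0, triv_ext_inD, triv_ext_inN); ring.

Section ZmodMorphism.
Variables (U W : zmodType) (f : U -> W).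
Hypothesis f_zmod : zmod_morphism f.

Let fA : {additive U -> W} := HB.pack f (GRing.isZmodMorphism.Build U W f f_zmod).

Lemma zmod_morphism0 : f 0 = 0. Proof. exact: (raddf0 fA). Qed.
Lemma zmod_morphismD : {morph f : x y / x + y}. Proof. exact: (raddfD fA). Qed.
Lemma zmod_morphismN : {morph f : x / - x}. Proof. exact: (raddfN fA). Qed.

End ZmodMorphism.

Section TripleSums.
Variables (R : zmodType) (N : nat).

Definition tri_sum (F : nat -> nat -> nat -> R) : R :=
  \sum_(a < N.+1) \sum_(b < N.+1) \sum_(c < N.+1 | (a + b + c == N)%N) F a b c.

Lemma eq_tri_sum F G : (forall a b c, F a b c = G a b c) -> tri_sum F = tri_sum G.
Proof.
by move=> FG; apply: eq_bigr => a _; apply: eq_bigr => b _; apply: eq_bigr.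
Qed.

Lemma tri_sumD F G :
  tri_sum (fun a b c => F a b c + G a b c) = tri_sum F + tri_sum G.
Proof.
rewrite /tri_sum -big_split; apply: eq_bigr => a _.
by rewrite -big_split; apply: eq_bigr => b _; rewrite -big_split.
Qed.

Lemma tri_sum_swap12 F : tri_sum (fun a b c => F b a c) = tri_sum F.
Proof.
rewrite /tri_sum exchange_big; apply: eq_bigr => a _; apply: eq_bigr => b _.
by apply: eq_bigl => c; rewrite (addnC b).
Qed.

Lemma tri_sum_swap23 F : tri_sum (fun a b c => F a c b) = tri_sum F.
Proof.
rewrite /tri_sum; apply: eq_bigr => a _.
under eq_bigr do rewrite big_mkcond; under [RHS]eq_bigr do rewrite big_mkcond.
rewrite exchange_big.
by apply: eq_bigr => b _; apply: eq_bigr => c _; rewrite addnAC.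
Qed.

Lemma tri_sum_swap13 F : tri_sum (fun a b c => F c b a) = tri_sum F.
Proof.
rewrite (tri_sum_swap23 (fun a b c => F b c a)).
by rewrite (tri_sum_swap12 (fun a b c => F a c b)) tri_sum_swap23.
Qed.

Lemma tri_sum_cycle F : tri_sum (fun a b c => F c a b) = tri_sum F.
Proof. by rewrite (tri_sum_swap23 (fun a b c => F b a c)) tri_sum_swap12. Qed.

Lemma tri_sum_eq0_of_parts F P0 P1 P2 P3 :
  (forall a b c, F a b c = P0 a b c + P1 a b c + P2 a b c + P3 a b c) ->
  (forall a b c, P0 a b c + P1 b a c + P2 c b a + P3 c a b = 0) ->
  tri_sum F = 0.
Proof.
move=> splitF cancelP; rewrite (eq_tri_sum splitF) !tri_sumD.
rewrite -(tri_sum_swap12 P1) -(tri_sum_swap13 P2) -(tri_sum_cycle P3) -!tri_sumD.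
rewrite (eq_tri_sum cancelP) /tri_sum big1 // => a _.
by rewrite big1 // => b _; rewrite big1.
Qed.

Lemma tri_sum_slices F :
  tri_sum F = \sum_(a < N.+1) \sum_(b < (N - a).+1) F a b (N - a - b)%N.
Proof.
apply: eq_bigr => a _; have le_aN : (a <= N)%N by rewrite -ltnS.
rewrite [RHS](big_ord_widen N.+1 (fun b => F a b (N - a - b)%N)) ?ltnS ?leq_subr //.
rewrite [RHS]big_mkcond; apply: eq_bigr => b _.
rewrite (eq_bigl (fun c : 'I_N.+1 => (b < (N - a).+1)%N && (c == N - a - b :> nat)%N)).
  rewrite (big_ord1_cond_eq _ (F a b) (fun=> (b < (N - a).+1)%N)).
  by have -> : (N - a - b < N.+1)%N by lia.
by move=> c; apply/eqP/andP => [|[/eqP]]; lia.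
Qed.

End TripleSums.

Section LeibnizCochains.
Variables (K : fieldType) (g V : lmodType K).
Variables (br : g -> g -> g) (rhoL rhoR : g -> V -> V).
Hypotheses (br_linl : forall y, linear (br^~ y)) (br_linr : forall x, linear (br x)).
Hypotheses (rhoL_linl : forall v, linear (rhoL^~ v)) (rhoL_linr : forall x, linear (rhoL x)).
Hypotheses (rhoR_linl : forall v, linear (rhoR^~ v)) (rhoR_linr : forall x, linear (rhoR x)).

Lemma brDl a b y : br (a + b) y = br a y + br b y.
Proof. exact: (zmod_morphismD (zmod_morphism_linear (br_linl y)) a b). Qed.
Lemma brNl a y : br (- a) y = - br a y.
Proof. exact: (zmod_morphismN (zmod_morphism_linear (br_linl y)) a). Qed.
Lemma brDr x a b : br x (a + b) = br x a + br x b.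
Proof. exact: (zmod_morphismD (zmod_morphism_linear (br_linr x)) a b). Qed.
Lemma brNr x a : br x (- a) = - br x a.
Proof. exact: (zmod_morphismN (zmod_morphism_linear (br_linr x)) a). Qed.
Lemma rhoLDl a b v : rhoL (a + b) v = rhoL a v + rhoL b v.
Proof. exact: (zmod_morphismD (zmod_morphism_linear (rhoL_linl v)) a b). Qed.
Lemma rhoLNl a v : rhoL (- a) v = - rhoL a v.
Proof. exact: (zmod_morphismN (zmod_morphism_linear (rhoL_linl v)) a). Qed.
Lemma rhoLDr x a b : rhoL x (a + b) = rhoL x a + rhoL x b.
Proof. exact: (zmod_morphismD (zmod_morphism_linear (rhoL_linr x)) a b). Qed.
Lemma rhoLNr x a : rhoL x (- a) = - rhoL x a.
Proof. exact: (zmod_morphismN (zmod_morphism_linear (rhoL_linr x)) a). Qed.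
Lemma rhoRDl a b v : rhoR (a + b) v = rhoR a v + rhoR b v.
Proof. exact: (zmod_morphismD (zmod_morphism_linear (rhoR_linl v)) a b). Qed.
Lemma rhoRNl a v : rhoR (- a) v = - rhoR a v.
Proof. exact: (zmod_morphismN (zmod_morphism_linear (rhoR_linl v)) a). Qed.
Lemma rhoRDr x a b : rhoR x (a + b) = rhoR x a + rhoR x b.
Proof. exact: (zmod_morphismD (zmod_morphism_linear (rhoR_linr x)) a b). Qed.
Lemma rhoRNr x a : rhoR x (- a) = - rhoR x a.
Proof. exact: (zmod_morphismN (zmod_morphism_linear (rhoR_linr x)) a). Qed.

Let bilinE := (brDl, brNl, brDr, brNr, rhoLDl, rhoLNl, rhoLDr, rhoLNr,
  rhoRDl, rhoRNl, rhoRDr, rhoRNr).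

Definition induced_br (X : V -> g) u v := rhoL (X u) v + rhoR (X v) u.

Definition rb_defect (X Y : V -> g) u v := br (X u) (Y v) - X (induced_br Y u v).

Definition coboundary2 (X : V -> g) (f : V -> V -> g) u v w :=
  br (X u) (f v w) - X (rhoR (f v w) u)
  - br (X v) (f u w) + X (rhoR (f u w) v)
  - br (f u v) (X w) + X (rhoL (f u v) w)
  - f (induced_br X u v) w - f v (induced_br X u w) + f u (induced_br X v w).

Lemma coboundary2E T f u v w :
  coboundary br rhoL rhoR T 2 (fun s => f (nth 0 s 0) (nth 0 s 1)) [:: u; v; w] =
  coboundary2 T f u v w.
Proof.
rewrite /coboundary /drop_at /coboundary2 /induced_br /= !big_ord_recr !big_ord0 /=.
rewrite (exprS _ 2) !expr0 !expr1 sqrrN expr1n mulr1 !scale1r !scaleN1r.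
zmodule_ring.
Qed.

Section CoboundaryLinear.
Variables (X : V -> g) (u v w : V).
Hypothesis X_zmod : zmod_morphism X.

Lemma eq_coboundary2 f f' :
  (forall x y, f x y = f' x y) -> coboundary2 X f u v w = coboundary2 X f' u v w.
Proof. by move=> ff'; rewrite /coboundary2 !ff'. Qed.

Lemma coboundary2D f f' :
  coboundary2 X (fun x y => f x y + f' x y) u v w =
  coboundary2 X f u v w + coboundary2 X f' u v w.
Proof. rewrite /coboundary2 !(bilinE, zmod_morphismD X_zmod); zmodule_ring. Qed.

Lemma coboundary2_0 : coboundary2 X (fun _ _ => 0) u v w = 0.
Proof.
apply: (@addrI _ (coboundary2 X (fun _ _ => 0) u v w)); rewrite addr0 -coboundary2D.
by apply: eq_coboundary2 => x y; rewrite addr0.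
Qed.

Lemma coboundary2_sum I (r : seq I) (F : I -> V -> V -> g) :
  coboundary2 X (fun x y => \sum_(i <- r) F i x y) u v w =
  \sum_(i <- r) coboundary2 X (F i) u v w.
Proof.
elim: r => [|i r IHr].
  rewrite big_nil -[RHS]coboundary2_0.
  by apply: eq_coboundary2 => x y; rewrite big_nil.
rewrite big_cons -IHr -coboundary2D.
by apply: eq_coboundary2 => x y; rewrite big_cons.
Qed.

End CoboundaryLinear.

Hypothesis br_leibniz : forall x y z, br x (br y z) = br (br x y) z + br y (br x z).
Hypothesis rhoL_br : forall x y v, rhoL (br x y) v = rhoL x (rhoL y v) - rhoL y (rhoL x v).
Hypothesis rhoR_br : forall x y v, rhoR (br x y) v = rhoL x (rhoR y v) - rhoR y (rhoL x v).
Hypothesis rhoR_rhoL : forall x y v, rhoR y (rhoL x v) = - rhoR y (rhoR x v).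

Section DefectParts.
Variables (u v w : V).

(* The terms of [coboundary2 X (rb_defect Y Z)] grouped by the permutation of
   (X, Y, Z) under which they cancel, see [parts_cancel]. *)
Definition part_id (X Y Z : V -> g) :=
  - br (X u) (Y (induced_br Z v w)) - br (X v) (br (Y u) (Z w))
  + br (X v) (Y (induced_br Z u w)) + br (Y (induced_br Z u v)) (X w)
  - X (rhoR (br (Y v) (Z w)) u) + X (rhoR (Y (induced_br Z v w)) u)
  + X (rhoR (br (Y u) (Z w)) v) - X (rhoR (Y (induced_br Z u w)) v)
  + X (rhoL (br (Y u) (Z v)) w) - X (rhoL (Y (induced_br Z u v)) w).

Definition part_12 (X Y Z : V -> g) :=
  br (X u) (br (Y v) (Z w)) + Y (rhoL (Z v) (rhoL (X u) w))
  + Y (rhoR (Z w) (rhoL (X u) v)) + Y (rhoR (Z w) (rhoR (X v) u)).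

Definition part_13 (X Y Z : V -> g) :=
  - br (br (Y u) (Z v)) (X w) - br (Y (induced_br X u v)) (Z w).

Definition part_cyc (X Y Z : V -> g) :=
  br (Y u) (Z (induced_br X v w)) - br (Y v) (Z (induced_br X u w))
  + Y (rhoR (Z (induced_br X u w)) v) + Y (rhoL (Z v) (rhoR (X w) u))
  + Y (rhoL (Z (induced_br X u v)) w) - Y (induced_br Z u (induced_br X v w)).

Variables (X Y Z : V -> g).
Hypotheses (X_zmod : zmod_morphism X) (Y_zmod : zmod_morphism Y).
Hypothesis Z_zmod : zmod_morphism Z.

Let zmodE := (zmod_morphismD X_zmod, zmod_morphismN X_zmod, zmod_morphismD Y_zmod,
  zmod_morphismN Y_zmod, zmod_morphismD Z_zmod, zmod_morphismN Z_zmod).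

Lemma coboundary2_defect_parts :
  coboundary2 X (rb_defect Y Z) u v w =
  part_id X Y Z + part_12 X Y Z + part_13 X Y Z + part_cyc X Y Z.
Proof.
rewrite /coboundary2 /rb_defect /part_id /part_12 /part_13 /part_cyc /induced_br.
rewrite !(bilinE, zmodE); zmodule_ring.
Qed.

Lemma parts_cancel : part_id X Y Z + part_12 Y X Z + part_13 Z Y X + part_cyc Z X Y = 0.
Proof.
rewrite /part_id /part_12 /part_13 /part_cyc (br_leibniz (Y u)) /induced_br.
rewrite !(bilinE, zmodE) !(rhoL_br, rhoR_br) !(bilinE, zmodE) !rhoR_rhoL !(bilinE, zmodE).
zmodule_ring.
Qed.

End DefectParts.

Lemma tri_sum_coboundary2_defect u v w N (Ts : nat -> V -> g) :
  (forall i, zmod_morphism (Ts i)) ->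
  tri_sum N (fun a b c => coboundary2 (Ts a) (rb_defect (Ts b) (Ts c)) u v w) = 0.
Proof.
move=> Ts_zmod; apply: tri_sum_eq0_of_parts => a b c.
  exact: coboundary2_defect_parts.
exact: parts_cancel.
Qed.

Section Deformation.
Variables (T : V -> g) (n : nat) (Ts : nat -> V -> g).
Hypotheses (Ts0 : Ts 0%N = T) (Ts_lin : forall i, (i <= n)%N -> linear (Ts i)).
Hypothesis Ts_deform : forall i, (i <= n)%N -> forall x y,
  \sum_(k < i.+1) rb_defect (Ts k) (Ts (i - k)%N) x y = 0.

(* The T_i with i > n are unconstrained; replacing them by 0 makes the whole
   family additive. *)
Definition truncation i v := if (i <= n)%N then Ts i v else 0.

Lemma truncation_zmod i : zmod_morphism (truncation i).
Proof.
move=> x y; rewrite /truncation; case: leqP => [le_in | _]; last by rewrite subr0.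
exact: (zmod_morphism_linear (Ts_lin le_in)).
Qed.

Lemma rb_defect_truncation b c x y : (b <= n)%N -> (c <= n)%N ->
  rb_defect (truncation b) (truncation c) x y = rb_defect (Ts b) (Ts c) x y.
Proof. by move=> le_bn le_cn; rewrite /rb_defect /induced_br /truncation le_bn le_cn. Qed.

Lemma rb_defect_truncation_eq0 b c x y : (n < b)%N || (n < c)%N ->
  rb_defect (truncation b) (truncation c) x y = 0.
Proof.
move=> out_bc; rewrite /rb_defect /induced_br /truncation.
case: (leqP b n) => [le_bn | _]; last first.
  by rewrite (zmod_morphism0 (zmod_morphism_linear (br_linl _))) subrr.
case: (leqP c n) => [le_cn | _]; first lia.
rewrite (zmod_morphism0 (zmod_morphism_linear (br_linr _))).
rewrite (zmod_morphism0 (zmod_morphism_linear (rhoL_linl _))).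
rewrite (zmod_morphism0 (zmod_morphism_linear (rhoR_linl _))) addr0.
by rewrite (zmod_morphism0 (zmod_morphism_linear (Ts_lin le_bn))) subrr.
Qed.

Lemma defect_sum_truncation_eq0 k x y : (k <= n)%N ->
  \sum_(b < k.+1) rb_defect (truncation b) (truncation (k - b)%N) x y = 0.
Proof.
move=> le_kn; rewrite -[RHS](Ts_deform le_kn x y); apply: eq_bigr => b _.
by apply: rb_defect_truncation; have := ltn_ord b; lia.
Qed.

Lemma defect_sum_truncation_obstruction x y :
  \sum_(b < n.+2) rb_defect (truncation b) (truncation (n.+1 - b)%N) x y =
  obstruction br rhoL rhoR n Ts x y.
Proof.
rewrite big_ord_recl big_ord_recr /= /bump /= add1n subn0 subnn.
rewrite !rb_defect_truncation_eq0 ?ltnSn ?orbT // add0r addr0.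
rewrite /obstruction big_add1 /= big_mkord; apply: eq_bigr => i _.
by rewrite add1n rb_defect_truncation //; have := ltn_ord i; lia.
Qed.

Lemma coboundary2_obstruction u v w :
  coboundary2 T (obstruction br rhoL rhoR n Ts) u v w = 0.
Proof.
have := tri_sum_coboundary2_defect u v w n.+1 truncation_zmod.
rewrite tri_sum_slices big_ord_recl [X in _ + X]big1 ?addr0 => [<-|a _]; last first.
  rewrite lift0 subSS -(coboundary2_sum u v w (truncation_zmod _)).
  rewrite -[RHS](coboundary2_0 u v w (truncation_zmod a.+1)).
  apply: eq_coboundary2 => x y.
  by apply: defect_sum_truncation_eq0; rewrite leq_subr.
rewrite -(coboundary2_sum u v w (truncation_zmod _)) subn0 -Ts0.
apply: eq_coboundary2 => x y; symmetry; exact: defect_sum_truncation_obstruction.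
Qed.

End Deformation.

End LeibnizCochains.

Theorem proposition3p24 (K : fieldType) (g V : lmodType K)
    (br : g -> g -> g) (rhoL rhoR : g -> V -> V) (T : V -> g)
    (n : nat) (Ts : nat -> V -> g) :
  is_leibniz br ->
  is_representation br rhoL rhoR ->
  is_relRB br rhoL rhoR T ->
  is_order_deformation br rhoL rhoR T n Ts ->
  forall u v w : V,
    coboundary br rhoL rhoR T 2
      (fun s => obstruction br rhoL rhoR n Ts (nth 0 s 0) (nth 0 s 1))
      [:: u; v; w] = 0.
Proof.
move=> [br_linr br_linl br_leibniz] [[rhoL_linl rhoR_linl rhoL_linr rhoR_linr]].
(* The Rota-Baxter identity of T is the degree-0 deformation equation. *)
move=> [rhoL_br rhoR_br rhoR_rhoL] _ [Ts0 Ts_lin Ts_deform] u v w.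
rewrite coboundary2E; exact: coboundary2_obstruction.
Qed.
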